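(* For every $(\overline{u}_{T,k+1/2})_{k=1}^4\in\mathbb{R}^4$, the matrix $\boldsymbol{A}$ is a nonsingular M-matrix (in particular strictly diagonally dominant, with $\boldsymbol{A}^{-1}$ entrywise nonnegative), and the matrix $\boldsymbol{C}:=\boldsymbol{A}^{-1}\boldsymbol{B}$ is entrywise nonnegative and satisfies $\sum_{j=1}^4 c_{ij}=1$ for every $i\in\{1,\dots,4\}$.
   Context: Indices in $\{1,2,3,4\}$ are taken cyclically mod 4. Limiter: $\varphi(r)=\dfrac{r^4+r^3+r^2+r}{r^4+r^3+r^2+r+1}$ for $r\ge0$. Given total velocities $\overline{u}_{T,k+1/2}\in\mathbb{R}$, $k=1,\dots,4$, define $\overline{\omega}^V_{k+1/2}=\varphi(\max(0,\overline{u}_{T,k-1/2}/\overline{u}_{T,k+1/2}))$ if $\overline{u}_{T,k+1/2}>0$, $=\varphi(\max(0,\overline{u}_{T,k+3/2}/\overline{u}_{T,k+1/2}))$ if $\overline{u}_{T,k+1/2}<0$, and $=0$ if $\overline{u}_{T,k+1/2}=0$. The $4\times4$ matrix $\boldsymbol{A}=(a_{ij})$ has $a_{kk}=1$, $a_{k,k-1}=-\overline{\omega}^V_{k+1/2}$ if $\overline{u}_{T,k+1/2}\ge0$ (else $0$), $a_{k,k+1}=-\overline{\omega}^V_{k+1/2}$ if $\overline{u}_{T,k+1/2}<0$ (else $0$), and all other entries $0$. The $4\times4$ matrix $\boldsymbol{B}=(b_{ij})$ has $b_{kk}=1-\overline{\omega}^V_{k+1/2}$ if $\overline{u}_{T,k+1/2}\ge0$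 (else $0$), $b_{k,k+1}=1-\overline{\omega}^V_{k+1/2}$ if $\overline{u}_{T,k+1/2}<0$ (else $0$), and all other entries $0$. *)

(* the statement is purely algebraic/order-theoretic,
   stated over an arbitrary real field R (covers the real numbers). *)
From HB Require Import structures.
From mathcomp Require Import all_boot all_order all_algebra.
Set Implicit Arguments. Unset Strict Implicit. Unset Printing Implicit Defensive.
Import Order.TTheory GRing.Theory Num.Theory.
Local Open Scope ring_scope.

(* Indices k = 1..4 are represented by 'I_4 = {0,..,3}; cyclic shifts mod 4
   are ordS (k+1) and ord_pred (k-1).  u k stands for  u_{T,k+1/2}. *)

Definition limiter {R : realFieldType} (r : R) : R :=
  (r ^+ 4 + r ^+ 3 + r ^+ 2 + r) / (r ^+ 4 + r ^+ 3 + r ^+ 2 + r + 1).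

Definition omegaV {R : realFieldType} (u : 'I_4 -> R) (k : 'I_4) : R :=
  if 0 < u k then limiter (Num.max 0 (u (ord_pred k) / u k))
  else if u k < 0 then limiter (Num.max 0 (u (ordS k) / u k))
  else 0.

Definition matA {R : realFieldType} (u : 'I_4 -> R) : 'M[R]_4 :=
  \matrix_(i < 4, j < 4)
    (if i == j then 1
     else if (0 <= u i) && (j == ord_pred i) then - omegaV u i
     else if (u i < 0) && (j == ordS i) then - omegaV u i
     else 0).

Definition matB {R : realFieldType} (u : 'I_4 -> R) : 'M[R]_4 :=
  \matrix_(i < 4, j < 4)
    (if (0 <= u i) && (j == i) then 1 - omegaV u i
     else if (u i < 0) && (j == ordS i) then 1 - omegaV u i
     else 0).

Definition nonsingular_M_matrix {R : realFieldType} {n : nat} (A : 'M[R]_n) : Prop :=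
  (forall i j, i != j -> A i j <= 0) /\ A \in unitmx /\ (forall i j, 0 <= invmx A i j).

Definition strictly_diag_dominant {R : realFieldType} {n : nat} (A : 'M[R]_n) : Prop :=
  forall i, \sum_(j < n | j != i) `|A i j| < `|A i i|.

From HB Require Import structures.
From mathcomp Require Import all_boot all_order all_algebra.
Import Order.TTheory GRing.Theory Num.Theory.
Set Implicit Arguments. Unset Strict Implicit. Unset Printing Implicit Defensive.
Local Open Scope ring_scope.

(* Since 0 <= w_i < 1, A is a Z-matrix whose rows sum to 1 - w_i > 0.  This
   gives a discrete minimum principle: if A X >= 0, then at the least entry
   x_m of a column of X we have 0 <= (A X)_m <= (1 - w_m) x_m, so x_m >= 0.
   Hence A is invertible with A^-1 >= 0.  B >= 0 has the same row sums as A,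
   so C = A^-1 B >= 0 and C 1 = A^-1 B 1 = A^-1 A 1 = 1. *)

Section ZMatrixPositiveRowSums.
Variables (R : realFieldType) (n : nat) (A : 'M[R]_n).
Hypothesis A_offdiag_le0 : forall i j, i != j -> A i j <= 0.
Hypothesis A_rowsum_gt0 : forall i, 0 < \sum_j A i j.

Lemma Zmx_minimum_principle p (X : 'M[R]_(n, p)) :
  (forall i k, 0 <= (A *m X) i k) -> forall i k, 0 <= X i k.
Proof.
move=> AX_ge0 i k.
case: (arg_minP (fun l => X l k) (isT : predT i)) => m _ Xm_min.
apply: le_trans (Xm_min i isT); rewrite leNgt; apply/negP => Xm_lt0.
have := AX_ge0 m k; rewrite leNgt => /negP; apply.
have AX_le : (A *m X) m k <= (\sum_j A m j) * X m k.
  rewrite mxE mulr_suml; apply: ler_sum => j _.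
  have [-> // | jm] := eqVneq j m.
  by apply: ler_wnM2l; [by apply: A_offdiag_le0; rewrite eq_sym | exact: Xm_min].
by apply: le_lt_trans AX_le _; rewrite pmulr_rlt0.
Qed.

Lemma Zmx_unitmx : A \in unitmx.
Proof.
rewrite unitmxE unitfE -det_tr; apply/negP => /det0P [v /negP v_neq0 vAT0].
have Avt0 : A *m v^T = 0 by rewrite -[A]trmxK -trmx_mul vAT0 trmx0.
have vt_ge0 : forall i k, 0 <= v^T i k.
  by apply: Zmx_minimum_principle => i k; rewrite Avt0 mxE.
have vt_le0 : forall i k, 0 <= (- v^T) i k.
  by apply: Zmx_minimum_principle => i k; rewrite mulmxN Avt0 oppr0 mxE.
apply: v_neq0; apply/eqP/matrixP => z j; apply/eqP; rewrite mxE eq_le.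
by have := vt_ge0 j z; have := vt_le0 j z; rewrite !mxE oppr_ge0 => -> ->.
Qed.

Lemma Zmx_invmx_ge0 i j : 0 <= invmx A i j.
Proof.
by apply: Zmx_minimum_principle => k l; rewrite mulmxV ?Zmx_unitmx // mxE ler0n.
Qed.

Lemma Zmx_strictly_diag_dominant : strictly_diag_dominant A.
Proof.
move=> i; have := A_rowsum_gt0 i; rewrite (bigD1 i) //=.
have -> : \sum_(j < n | j != i) `|A i j| = - \sum_(j < n | j != i) A i j.
  by rewrite -sumrN; apply: eq_bigr => j ji; rewrite ler0_norm // A_offdiag_le0 // eq_sym.
move=> sum_gt0; apply: lt_le_trans (ler_norm (A i i)).
by rewrite -subr_gt0 opprK.
Qed.

End ZMatrixPositiveRowSums.

Lemma rowsum_invmx_mulmx (R : fieldType) n (A B : 'M[R]_n) :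
  A \in unitmx -> (forall i, \sum_j B i j = \sum_j A i j) ->
  forall i, \sum_j (invmx A *m B) i j = 1.
Proof.
move=> A_unit sumBA i.
pose e : 'cV[R]_n := const_mx 1.
have rowsumE (M : 'M[R]_n) k : \sum_j M k j = (M *m e) k 0.
  by rewrite mxE; apply: eq_bigr => j _; rewrite mxE mulr1.
have Be : B *m e = A *m e by apply/matrixP => k z; rewrite ord1 -!rowsumE.
by rewrite rowsumE -mulmxA Be mulmxA mulVmx // mul1mx mxE.
Qed.

Lemma limiter_ge0_lt1 (R : realFieldType) (r : R) : 0 <= r -> 0 <= limiter r < 1.
Proof.
move=> r_ge0; rewrite /limiter; set p := _ + r.
have p_ge0 : 0 <= p by rewrite /p !addr_ge0 ?exprn_ge0.
have p1_gt0 : 0 < p + 1 by rewrite ltr_wpDl.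
by rewrite divr_ge0 ?(ltW p1_gt0) //= ltr_pdivrMr // mul1r ltrDl.
Qed.

Section LimiterMatrices.
Variables (R : realFieldType) (u : 'I_4 -> R).

Lemma omegaV_ge0_lt1 i : 0 <= omegaV u i < 1.
Proof.
rewrite /omegaV; case: ifP => _; first by rewrite limiter_ge0_lt1 ?le_max ?lexx.
by case: ifP => _; rewrite ?limiter_ge0_lt1 ?le_max ?lexx ?ltr01.
Qed.

Definition matA_col (i : 'I_4) := if 0 <= u i then ord_pred i else ordS i.
Definition matB_col (i : 'I_4) := if 0 <= u i then i else ordS i.

Lemma matA_col_neq i : matA_col i != i.
Proof. by rewrite /matA_col; case: ifP => _; case: i => [[|[|[|[|]]]]]. Qed.

Lemma matAE i j :
  matA u i j = if i == j then 1 else if j == matA_col i then - omegaV u i else 0.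
Proof.
rewrite /matA /matA_col mxE; case: (i == j) => //.
by case: (leP 0 (u i)); rewrite ?andbF.
Qed.

Lemma matBE i j : matB u i j = if j == matB_col i then 1 - omegaV u i else 0.
Proof. by rewrite /matB /matB_col mxE; case: (leP 0 (u i)); rewrite ?andbF. Qed.

Lemma matA_offdiag_le0 i j : i != j -> matA u i j <= 0.
Proof.
move=> ij; rewrite matAE (negbTE ij); case: ifP => _ //.
by rewrite oppr_le0; case/andP: (omegaV_ge0_lt1 i).
Qed.

Lemma matB_ge0 i j : 0 <= matB u i j.
Proof.
rewrite matBE; case: ifP => _ //.
by rewrite subr_ge0; case/andP: (omegaV_ge0_lt1 i) => _ /ltW.
Qed.

Lemma sum_matA i : \sum_j matA u i j = 1 - omegaV u i.
Proof.
have col_neq := matA_col_neq i.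
rewrite (bigD1 i) //= (bigD1 (matA_col i)) //= big1 ?addr0.
  by rewrite !matAE eqxx eq_sym (negbTE col_neq) eqxx.
by move=> j /andP [ji jcol]; rewrite matAE eq_sym (negbTE ji) (negbTE jcol).
Qed.

Lemma sum_matB i : \sum_j matB u i j = 1 - omegaV u i.
Proof.
rewrite (bigD1 (matB_col i)) //= big1 ?addr0; first by rewrite matBE eqxx.
by move=> j jcol; rewrite matBE (negbTE jcol).
Qed.

Lemma sum_matA_gt0 i : 0 < \sum_j matA u i j.
Proof. by rewrite sum_matA subr_gt0; case/andP: (omegaV_ge0_lt1 i). Qed.

End LimiterMatrices.

Theorem mainTheorem2 (R : realFieldType) (u : 'I_4 -> R) :
  nonsingular_M_matrix (matA u) /\
  strictly_diag_dominant (matA u) /\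
  (forall i j, 0 <= invmx (matA u) i j) /\
  (forall i j, 0 <= (invmx (matA u) *m matB u) i j) /\
  (forall i, \sum_(j < 4) (invmx (matA u) *m matB u) i j = 1).
Proof.
have A_offdiag_le0 := @matA_offdiag_le0 R u.
have A_rowsum_gt0 := @sum_matA_gt0 R u.
have A_unit := Zmx_unitmx A_offdiag_le0 A_rowsum_gt0.
have invA_ge0 := Zmx_invmx_ge0 A_offdiag_le0 A_rowsum_gt0.
split; [|split; [|split; [|split]]].
- by split; [exact: A_offdiag_le0 | split].
- exact: Zmx_strictly_diag_dominant A_offdiag_le0 A_rowsum_gt0.
- exact: invA_ge0.
- move=> i j; rewrite mxE; apply: sumr_ge0 => k _.
  by rewrite mulr_ge0 ?invA_ge0 ?matB_ge0.
- by apply: rowsum_invmx_mulmx => // i; rewrite sum_matA sum_matB.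
Qed.
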